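(* In $Q_n$, each of the sets $\{x_{\emptyset,k}: k=1,\dots,n\}$ and $\{x_{\{1,\dots,n\}\setminus\{k\},k}: k=1,\dots,n\}$ is a sufficient set, i.e. its $du$-envelope contains a defining set of pseudo-roots of $\mathcal P(t)$.
   Context: Fix a field $k$. $Q_n$ is the associative unital $k$-algebra with generators $x_{A,i}$ ($A\subseteq\{1,\dots,n\}$, $i\notin A$), called pseudo-roots, subject to $x_{A\cup\{i\},j}+x_{A,i}=x_{A\cup\{j\},i}+x_{A,j}$ and $x_{A\cup\{i\},j}\,x_{A,i}=x_{A\cup\{j\},i}\,x_{A,j}$ for all $A$ and $i\ne j$, $i,j\notin A$. With $t$ central, $\mathcal P(t)=(t-x_{A_n,i_n})\cdots(t-x_{A_1,i_1})$ for an ordering $(i_1,\dots,i_n)$ of $\{1,\dots,n\}$ and $A_k=\{i_1,\dots,i_{k-1}\}$ (independent of the ordering). A set $Y$ of pseudo-roots is defining if $\mathcal P(t)=(t-y_n)\cdots(t-y_1)$ with all $y_k\in Y$. The pseudo-root $x_{A,i}$ corresponds to an edge with tail $A\cup\{i\}$ and head $A$. For distinct pseudo-roots $x_{A,i},x_{B,j}$ with $A=B$ (common head), $\xi$ is obtained from the ordered pair by the $u$-operation if $(x_{A,i}-x_{B,j})x_{A,i}=\xi(x_{A,i}-x_{B,j})$; for distinct pseudo-roots with $A\cup\{i\}=B\cup\{j\}$ (common tail), $\eta$ is obtained by the $d$-operation if $(x_{A,i}-x_{B,j})\eta=x_{A,i}(x_{A,i}-x_{B,j})$. The $du$-envelope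 of a set $Z$ of pseudo-roots is the set of pseudo-roots obtained from $Z$ by successive $d$- and $u$-operations; $Z$ is sufficient if its $du$-envelope contains a defining set. *)

From HB Require Import structures.
From mathcomp Require Import all_boot all_order all_algebra.
Set Implicit Arguments. Unset Strict Implicit. Unset Printing Implicit Defensive.
Import GRing.Theory.
Local Open Scope ring_scope.

(* Indices {1,...,n} are represented by 'I_n.  A pseudo-root x_{A,i} is
   represented by the pair (A, i) with i \notin A. *)
Definition proot (n : nat) := ({set 'I_n} * 'I_n)%type.
Definition valid_proot n (p : proot n) : bool := p.2 \notin p.1.

Definition Qrel (k : fieldType) (n : nat) (R : algType k)
  (f : {set 'I_n} -> 'I_n -> R) : Prop :=
  forall (A : {set 'I_n}) (i j : 'I_n), i != j -> i \notin A -> j \notin A ->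
    f (i |: A) j + f A i = f (j |: A) i + f A j /\
    f (i |: A) j * f A i = f (j |: A) i * f A j.

(* An identity E holds in Q_n: by the universal property of the presented
   algebra Q_n, this means it holds for every relation-satisfying assignment
   of the generators in every (associative unital) k-algebra. *)
Definition Qholds (k : fieldType) (n : nat)
  (E : forall R : algType k, ({set 'I_n} -> 'I_n -> R) -> Prop) : Prop :=
  forall (R : algType k) (f : {set 'I_n} -> 'I_n -> R), Qrel f -> E R f.

(* (t - y_m) ... (t - y_1) for ys = [:: y_1; ...; y_m], t central. *)
Definition prod_roots (n : nat) (R : nzRingType) (f : {set 'I_n} -> 'I_n -> R)
  (ys : seq (proot n)) : {poly R} :=
  foldr (fun y acc => acc * ('X - (f y.1 y.2)%:P)) 1 ys.

(* P(t), computed with the ordering (1, 2, ..., n), i.e. A_k = {1,...,k-1}. *)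
Definition Ppoly (n : nat) (R : nzRingType) (f : {set 'I_n} -> 'I_n -> R)
  : {poly R} :=
  prod_roots f [seq ([set j : 'I_n | (j < i)%N], i) | i : 'I_n <- enum 'I_n].

Definition defining (k : fieldType) (n : nat) (Y : proot n -> Prop) : Prop :=
  exists ys : seq (proot n),
    size ys = n /\ all (@valid_proot n) ys /\ (forall y, y \in ys -> Y y) /\
    @Qholds k n (fun R f => Ppoly f = prod_roots f ys).

Inductive du_envelope (k : fieldType) (n : nat) (Z : proot n -> Prop)
  : proot n -> Prop :=
| env_base p : valid_proot p -> Z p -> du_envelope k Z p
| env_u (A : {set 'I_n}) (i j : 'I_n) (xi : proot n) :
    du_envelope k Z (A, i) -> du_envelope k Z (A, j) -> i != j ->
    valid_proot xi ->
    @Qholds k n (fun R f =>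
      (f A i - f A j) * f A i = f xi.1 xi.2 * (f A i - f A j)) ->
    du_envelope k Z xi
| env_d (A B : {set 'I_n}) (i j : 'I_n) (eta : proot n) :
    du_envelope k Z (A, i) -> du_envelope k Z (B, j) ->
    i |: A = j |: B -> (A, i) != (B, j) ->
    valid_proot eta ->
    @Qholds k n (fun R f =>
      (f A i - f B j) * f eta.1 eta.2 = f A i * (f A i - f B j)) ->
    du_envelope k Z eta.

Definition sufficient (k : fieldType) (n : nat) (Z : proot n -> Prop) : Prop :=
  defining k (du_envelope k Z).

From HB Require Import structures.
From mathcomp Require Import all_boot all_order all_algebra.
Set Implicit Arguments. Unset Strict Implicit. Unset Printing Implicit Defensive.
Import GRing.Theory.
Local Open Scope ring_scope.

(* The du-envelope of either set contains every pseudo-root.  Writing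
   a = x_{A,i}, b = x_{A,j}, c = x_{A+i,j}, d = x_{A+j,i}, the relations
   c + a = d + b and c a = d b give d - c = a - b and d (a - b) = (a - b) a:
   so d is obtained from (a, b) by the u-operation, and a from (d, c) by the
   d-operation.  Induction on |A| (resp. on the size of the complement of A)
   then reaches every x_{A,i}, in particular the pseudo-roots
   x_{{1,...,m-1},m} of the standard ordering, which form a defining set. *)

Section Relations.

Variables (k : fieldType) (n : nat) (R : algType k).
Variables (f : {set 'I_n} -> 'I_n -> R) (A : {set 'I_n}) (i j : 'I_n).
Hypotheses (Hf : Qrel f) (ij : i != j) (iA : i \notin A) (jA : j \notin A).

Lemma Qrel_tailB : f (j |: A) i - f (i |: A) j = f A i - f A j.
Proof.
have [sumE _] := Hf ij iA jA.
have -> : f (j |: A) i = f (i |: A) j + f A i - f A j by rewrite sumE addrK.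
by rewrite addrAC [_ + f A i]addrC addrK.
Qed.

Lemma Qrel_u : (f A i - f A j) * f A i = f (j |: A) i * (f A i - f A j).
Proof.
have [_ mulE] := Hf ij iA jA.
by rewrite mulrBr -mulE -mulrBl Qrel_tailB.
Qed.

Lemma Qrel_d :
  (f (j |: A) i - f (i |: A) j) * f A i
  = f (j |: A) i * (f (j |: A) i - f (i |: A) j).
Proof. by rewrite Qrel_tailB Qrel_u. Qed.

End Relations.

Section Envelope.

Variables (k : fieldType) (n : nat).

Lemma du_envelope_set0 (p : proot n) :
  valid_proot p -> du_envelope k (fun q : proot n => q.1 = set0) p.
Proof.
case: p => A i; have [m] := ubnP #|A|; elim: m A i => // m IH A i ltAm.
rewrite /valid_proot /= => iA.
case: (set_0Vmem A) => [-> | [j jA]].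
  by apply: env_base; rewrite /valid_proot ?inE.
have ij : i != j by apply: contraNneq iA => ->.
have iAj : i \notin A :\ j by rewrite in_setD1 negb_and iA orbT.
have jAj : j \notin A :\ j by rewrite in_setD1 eqxx.
have ltAjm : (#|A :\ j| < m)%N by move: ltAm; rewrite (cardsD1 j A) jA add1n ltnS.
rewrite -(setD1K jA); apply: (@env_u _ _ _ (A :\ j) i j) => //.
- exact: IH.
- exact: IH.
- by rewrite /valid_proot /= setD1K.
- by move=> R f Hf /=; exact: Qrel_u.
Qed.

Lemma du_envelope_setC1 (p : proot n) :
  valid_proot p -> du_envelope k (fun q : proot n => q.1 = [set~ q.2]) p.
Proof.
case: p => C i; have [m] := ubnP #|~: C|; elim: m C i => // m IH C i ltCm.
rewrite /valid_proot /= => iC.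
have iCc : i \in ~: C by rewrite in_setC.
case: (set_0Vmem (~: C :\ i)) => [CcE | [j]].
  by apply: env_base => //=; rewrite -[C]setCK -(setD1K iCc) CcE setU0.
rewrite in_setD1 in_setC => /andP [ji jC].
have ij : i != j by rewrite eq_sym.
have ltCU1 (l : 'I_n) : l \notin C -> (#|~: (l |: C)| < m)%N.
  move=> lC; rewrite -ltnS (leq_trans _ ltCm) // ltnS proper_card // properC.
  by rewrite properEcard subsetUr cardsU1 lC add1n ltnSn.
apply: (@env_d _ _ _ (j |: C) (i |: C) i j (C, i)) => //.
- by apply: IH; [exact: ltCU1 | rewrite /valid_proot /= in_setU1 negb_or ij iC].
- by apply: IH; [exact: ltCU1 | rewrite /valid_proot /= in_setU1 negb_or ji jC].
- exact: setUCA.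
- by rewrite xpair_eqE negb_and ij orbT.
- by move=> R f Hf /=; exact: Qrel_d.
Qed.

End Envelope.

Lemma defining_of_valid (k : fieldType) (n : nat) (Y : proot n -> Prop) :
  (forall p, valid_proot p -> Y p) -> defining k Y.
Proof.
move=> validY.
set ys := [seq ([set j : 'I_n | (j < i)%N], i) | i : 'I_n <- enum 'I_n].
have ys_valid : all (@valid_proot n) ys.
  by apply/allP => y /mapP [i _ ->]; rewrite /valid_proot inE ltnn.
exists ys; split; first by rewrite size_map size_enum_ord.
split=> //; split=> // y /(allP ys_valid); exact: validY.
Qed.

Theorem proposition1p4p4 (k : fieldType) (n : nat) :
  sufficient k (fun p : proot n => p.1 = set0) /\
  sufficient k (fun p : proot n => p.1 = [set~ p.2]).
Proof.
split; apply: defining_of_valid.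
- exact: du_envelope_set0.
- exact: du_envelope_setC1.
Qed.
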